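(* For every integer $r\ge 0$: \begin{align*} \mathrm{LCD}[6r+3,2] &\ge 4r+2,\\ \mathrm{LCD}[6r+4,2] &\ge 4r+2,\\ \mathrm{LCD}[6r+5,2] &\ge 4r+2,\\ \mathrm{LCD}[6r+6,2] &\ge 4r+3,\\ \mathrm{LCD}[6r+7,2] &\ge 4r+4,\\ \mathrm{LCD}[6r+8,2] &\ge 4r+5. \end{align*}
   Context: All codes are binary linear codes, i.e. subspaces of $\mathbb{F}_2^n$; an $[n,k,d]$ code is one of length $n$, dimension $k$ and minimum Hamming distance $d$. A linear code $C$ is an LCD code if $C\cap C^\perp=\{0\}$, where $C^\perp$ is the dual with respect to the standard dot product. For positive integers $n\ge k$, $\mathrm{LCD}[n,k]$ denotes the largest $d$ such that there exists a binary $[n,k,d]$ LCD code. *)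

From HB Require Import structures.
From mathcomp Require Import all_boot all_order all_algebra.
Set Implicit Arguments. Unset Strict Implicit. Unset Printing Implicit Defensive.
Import GRing.Theory.
Local Open Scope ring_scope.

Notation word n := 'rV['F_2]_n.

Definition wt n (x : word n) : nat := #|[set i : 'I_n | x 0 i != 0]|.

Definition dot n (x y : word n) : 'F_2 := \sum_(i < n) x 0 i * y 0 i.

(* C is an F_2-linear subspace (over F_2, closure under + and 0 suffice). *)
Definition is_linear n (C : {set word n}) : bool :=
  (0 \in C) && [forall x in C, [forall y in C, x + y \in C]].

Definition dual n (C : {set word n}) : {set word n} :=
  [set y | [forall x in C, dot x y == 0]].

(* Binary linear [n,k] code: subspace of dimension k, i.e. with 2^k elements. *)
Definition is_code n k (C : {set word n}) : bool :=
  is_linear C && (#|C| == 2 ^ k)%N.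

Definition is_LCD_code n k (C : {set word n}) : bool :=
  is_code k C && (C :&: dual C == [set 0]).

(* Minimum distance = minimum weight of a nonzero codeword (linear code);
   default n for the zero code (irrelevant for k >= 1). *)
Definition min_dist n (C : {set word n}) : nat :=
  \big[minn/n]_(x in C | x != 0) wt x.

(* LCD[n,k]: the largest d such that a binary [n,k,d] LCD code exists
   (0 if no such code exists). *)
Definition LCD (n k : nat) : nat :=
  \max_(C : {set word n} | is_LCD_code k C) min_dist C.

From mathcomp Require Import all_boot all_order all_algebra zify ring.
Set Implicit Arguments. Unset Strict Implicit. Unset Printing Implicit Defensive.
Import GRing.Theory.
Local Open Scope ring_scope.

(* A two-dimensional binary code spanned by a and b is LCD as soon as its Gram
   determinant (a.a)(b.b) - (a.b)^2 is nonzero: by Cramer's rule a combination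
   i a + j b orthogonal to both a and b has i = j = 0, which also shows that a
   and b are independent.  Take the code whose generator matrix has x columns
   (1,0), y columns (0,1), z columns (1,1) and w zero columns: its nonzero
   weights are x + z, y + z and x + y, and its Gram determinant is
   xy + yz + zx mod 2. *)

Lemma F2P (c : 'F_2) : c = 0 \/ c = 1.
Proof. by case: c => [[|[|//]]] ?; [left | right]; apply: val_inj. Qed.

Lemma F2_natr_eq0 m : ((m%:R : 'F_2) == 0) = ~~ odd m.
Proof. by rewrite -(@Fp_nat_mod 2) // modn2; case: (odd m). Qed.

Lemma wtE n (u : word n) : wt u = (\sum_(i < n) (u 0%R i != 0%R))%N.
Proof.
rewrite /wt -sum1_card big_mkcond /=.
by apply: eq_bigr => i _; rewrite inE; case: (u 0 i != 0).
Qed.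

Lemma wt_le n (u : word n) : (wt u <= n)%N.
Proof. by rewrite /wt -[X in (_ <= X)%N]card_ord max_card. Qed.

Lemma wt_row_mx m1 m2 (u : word m1) (v : word m2) :
  wt (row_mx u v) = (wt u + wt v)%N.
Proof.
rewrite !wtE big_split_ord /=.
by congr (_ + _)%N; apply: eq_bigr => i _; rewrite ?row_mxEl ?row_mxEr.
Qed.

Lemma wt_const_mx m (c : 'F_2) : wt (const_mx c : word m) = ((c != 0%R) * m)%N.
Proof.
rewrite wtE (eq_bigr (fun=> (c != 0 : nat))) => [|i _]; last by rewrite mxE.
by rewrite sum_nat_const card_ord mulnC.
Qed.

Lemma dotC n (u v : word n) : dot u v = dot v u.
Proof. by apply: eq_bigr => i _; rewrite mulrC. Qed.

Lemma dotDr n (u v w : word n) : dot u (v + w) = dot u v + dot u w.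
Proof. by rewrite /dot -big_split; apply: eq_bigr => i _; rewrite mxE mulrDr. Qed.

Lemma dotZr n (u v : word n) (c : 'F_2) : dot u (c *: v) = c * dot u v.
Proof. by rewrite /dot mulr_sumr; apply: eq_bigr => i _; rewrite mxE mulrCA. Qed.

Lemma dot_row_mx m1 m2 (u u' : word m1) (v v' : word m2) :
  dot (row_mx u v) (row_mx u' v') = dot u u' + dot v v'.
Proof.
rewrite /dot big_split_ord /=.
by congr (_ + _); apply: eq_bigr => i _; rewrite ?row_mxEl ?row_mxEr.
Qed.

Lemma dot_const_mx m (c c' : 'F_2) :
  dot (const_mx c : word m) (const_mx c') = (c * c') *+ m.
Proof.
rewrite /dot (eq_bigr (fun=> c * c')) => [|i _]; last by rewrite !mxE.
by rewrite sumr_const card_ord.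
Qed.

Lemma dot0r n (u : word n) : dot u 0 = 0.
Proof. by rewrite /dot big1 // => i _; rewrite mxE mulr0. Qed.

Lemma min_dist_ge n (C : {set word n}) d : (d <= n)%N ->
  {in C, forall u, u != 0 -> (d <= wt u)%N} -> (d <= min_dist C)%N.
Proof.
move=> d_le_n C_ge; apply: (big_ind (fun m => d <= m)%N) => // [p q|u /andP[]].
  by rewrite leq_min => -> ->.
exact: C_ge.
Qed.

Lemma min_dist_le_LCD n k (C : {set word n}) :
  is_LCD_code k C -> (min_dist C <= LCD n k)%N.
Proof. exact: leq_bigmax_cond. Qed.

Section Span2.

Variables (n : nat) (a b : word n).

Definition span2 : {set word n} := [set p.1 *: a + p.2 *: b | p : 'F_2 * 'F_2].

Definition gram_det : 'F_2 := dot a a * dot b b - dot a b ^+ 2.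

Lemma mem_span2 (i j : 'F_2) : i *: a + j *: b \in span2.
Proof. by apply/imsetP; exists (i, j). Qed.

Lemma gram_kernel (i j : 'F_2) : gram_det != 0 ->
  dot a (i *: a + j *: b) = 0 -> dot b (i *: a + j *: b) = 0 -> i = 0 /\ j = 0.
Proof.
rewrite !dotDr !dotZr (dotC b a) => det_neq0 eq_a eq_b.
have Cramer_i : i * gram_det = dot b b * (i * dot a a + j * dot a b)
                               - dot a b * (i * dot a b + j * dot b b).
  by rewrite /gram_det; ring.
have Cramer_j : j * gram_det = dot a a * (i * dot a b + j * dot b b)
                               - dot a b * (i * dot a a + j * dot a b).
  by rewrite /gram_det; ring.
move: Cramer_i Cramer_j; rewrite eq_a eq_b !mulr0 subr0 => /eqP + /eqP.
by rewrite !mulf_eq0 (negbTE det_neq0) !orbF => /eqP -> /eqP ->.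
Qed.

Lemma span2_0 : 0 \in span2.
Proof. by rewrite -(addr0 0) -{1}(scale0r a) -(scale0r b) mem_span2. Qed.

Lemma span2_l : a \in span2.
Proof. by rewrite -[a]addr0 -{1}(scale1r a) -(scale0r b) mem_span2. Qed.

Lemma span2_r : b \in span2.
Proof. by rewrite -[b]add0r -{1}(scale1r b) -(scale0r a) mem_span2. Qed.

Lemma span2_linear : is_linear span2.
Proof.
apply/andP; split; first exact: span2_0.
apply/forall_inP => _ /imsetP[[i j] _ ->]; apply/forall_inP => _ /imsetP[[i' j'] _ ->].
by rewrite addrACA -!scalerDl mem_span2.
Qed.

Lemma min_dist_span2 d : (d <= wt a)%N -> (d <= wt b)%N -> (d <= wt (a + b))%N ->
  (d <= min_dist span2)%N.
Proof.
move=> d_a d_b d_ab; apply: min_dist_ge (leq_trans d_a (wt_le a)) _.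
move=> _ /imsetP[[i j] _ ->] /=.
by case: (F2P i) (F2P j) => -> [] ->; rewrite ?scale0r ?scale1r ?addr0 ?add0r ?eqxx.
Qed.

Hypothesis gram_det_neq0 : gram_det != 0.

Lemma card_span2 : #|span2| = 4%N.
Proof.
rewrite card_imset => [|[i j] [i' j'] /= eq_ij]; first by rewrite card_prod card_Fp.
have diff0 : (i - i') *: a + (j - j') *: b = 0.
  by rewrite !scalerBl addrACA -opprD eq_ij subrr.
have [] := @gram_kernel (i - i') (j - j') gram_det_neq0; rewrite ?diff0 ?dot0r //.
by move=> /eqP + /eqP; rewrite !subr_eq0 => /eqP -> /eqP ->.
Qed.

Lemma span2_dual : span2 :&: dual span2 = [set 0].
Proof.
apply/setP => v; rewrite !inE; have [-> | v_neq0] := eqVneq v 0.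
  by rewrite span2_0; apply/forall_inP => u _; rewrite dot0r.
apply/negbTE; apply: contra v_neq0 => /andP[/imsetP[[i j] _ ->] /forall_inP orth].
have [-> ->] := gram_kernel gram_det_neq0 (eqP (orth _ span2_l)) (eqP (orth _ span2_r)).
by rewrite !scale0r addr0.
Qed.

Lemma span2_LCD : is_LCD_code 2 span2.
Proof. by rewrite /is_LCD_code /is_code span2_linear card_span2 span2_dual !eqxx. Qed.

End Span2.

Section Blocks.

Variables x y z w : nat.

Definition block_word (cx cy cz : 'F_2) : word (x + y + z + w) :=
  row_mx (row_mx (row_mx (const_mx cx) (const_mx cy)) (const_mx cz)) (const_mx 0).

Lemma block_wordD cx cy cz dx dy dz :
  block_word cx cy cz + block_word dx dy dz = block_word (cx + dx) (cy + dy) (cz + dz).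
Proof. by rewrite !add_row_mx -!raddfD addr0. Qed.

Lemma wt_block_word cx cy cz :
  wt (block_word cx cy cz) = ((cx != 0%R) * x + (cy != 0%R) * y + (cz != 0%R) * z)%N.
Proof. by rewrite !wt_row_mx !wt_const_mx eqxx addn0. Qed.

Lemma dot_block_word cx cy cz dx dy dz :
  dot (block_word cx cy cz) (block_word dx dy dz) =
  (cx * dx) *+ x + (cy * dy) *+ y + (cz * dz) *+ z.
Proof. by rewrite !dot_row_mx !dot_const_mx mulr0 mul0rn addr0. Qed.

Lemma gram_det_block_word :
  gram_det (block_word 1 0 1) (block_word 0 1 1) = (x * y + y * z + z * x)%:R.
Proof.
rewrite /gram_det !dot_block_word !(mulr0, mul0r, mulr1, mulr0n, addr0, add0r).
by rewrite natrD !natrM; ring.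
Qed.

Lemma LCD_block_word_ge d : (d <= x + y)%N -> (d <= y + z)%N -> (d <= z + x)%N ->
  odd (x * y + y * z + z * x) -> (d <= LCD (x + y + z + w) 2)%N.
Proof.
move=> d_xy d_yz d_zx odd_det.
have det_neq0 : gram_det (block_word 1 0 1) (block_word 0 1 1) != 0.
  by rewrite gram_det_block_word F2_natr_eq0 negbK.
apply: leq_trans (min_dist_le_LCD (span2_LCD det_neq0)).
by apply: min_dist_span2; rewrite ?block_wordD wt_block_word /=; lia.
Qed.

End Blocks.

Theorem proposition2p2 (r : nat) :
  (4 * r + 2 <= LCD (6 * r + 3) 2)%N /\
  (4 * r + 2 <= LCD (6 * r + 4) 2)%N /\
  (4 * r + 2 <= LCD (6 * r + 5) 2)%N /\
  (4 * r + 3 <= LCD (6 * r + 6) 2)%N /\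
  (4 * r + 4 <= LCD (6 * r + 7) 2)%N /\
  (4 * r + 5 <= LCD (6 * r + 8) 2)%N.
Proof.
have LCD_ge x y z w n d : n = (x + y + z + w)%N -> d = (x + y)%N ->
    (x <= z)%N -> (y <= z)%N -> odd (x * y + y * z + z * x) -> (d <= LCD n 2)%N.
  by move=> -> -> x_le_z y_le_z; apply: LCD_block_word_ge; lia.
split; first by apply: (LCD_ge (2 * r + 1) (2 * r + 1) (2 * r + 1) 0)%N; lia.
split; first by apply: (LCD_ge (2 * r + 1) (2 * r + 1) (2 * r + 1) 1)%N; lia.
split; first by apply: (LCD_ge (2 * r + 1) (2 * r + 1) (2 * r + 1) 2)%N; lia.
split; first by apply: (LCD_ge (2 * r + 1) (2 * r + 2) (2 * r + 3) 0)%N; lia.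
split; first by apply: (LCD_ge (2 * r + 1) (2 * r + 3) (2 * r + 3) 0)%N; lia.
by apply: (LCD_ge (2 * r + 2) (2 * r + 3) (2 * r + 3) 0)%N; lia.
Qed.
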